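(* Let $\mathsf P$ be a network coding problem. A rate-capacity tuple $(\lambda,\omega)$ is $0$-achievable subject to the generalised routing constraint if and only if \[(\lambda,\omega)\in\mathsf{CL}\big(\mathrm{proj}^*_{\mathsf P}[\Gamma_{AA}\cap\mathcal C_T(\mathsf P)\cap\mathcal C_I(\mathsf P)]\big),\] where for $h\in\mathcal H[\mathcal S\cup\mathcal E]$, $\mathrm{proj}^*_{\mathsf P}[h]$ is the tuple with $\mathrm{proj}^*_{\mathsf P}[h](s)=\min_{u\in D(s)}h(s\wedge\mathrm{in}(u))$ for $s\in\mathcal S$ and $\mathrm{proj}^*_{\mathsf P}[h](e)=h(e)$ for $e\in\mathcal E$.
   Context: A network is $\mathsf G=(\mathcal V,\mathcal E)$, $\mathcal V$ a finite set of nodes, $\mathcal E$ a finite set of hyperedges, each $e$ with tail $\mathrm{tail}(e)\in\mathcal V$ and head $\mathrm{head}(e)\subseteq\mathcal V$, without directed cycles. A connection constraint $\mathsf M=(\mathcal S,O,D)$: finite source index set $\mathcal S$, $O:\mathcal S\to2^{\mathcal V}$ (where source $s$ is available), $D:\mathcal S\to2^{\mathcal V}$ (sinks of $s$). $\mathsf P=(\mathsf G,\mathsf M)$. Sources are imaginary edges with $\mathrm{head}(s)=O(s)$; $\mathrm{in}(e)=\{f\in\mathcal S\cup\mathcal E:\mathrm{tail}(e)\in\mathrm{head}(f)\}$ for $e\in\mathcal E$, $\mathrm{in}(u)=\{f\in\mathcal S\cup\mathcal E:u\in\mathrm{head}(f)\}$ for $u\in\mathcal V$. A rate-capacity tuple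 is $(\lambda,\omega)$, $\lambda:\mathcal S\to\mathbb R_{\ge0}$, $\omega:\mathcal E\to\mathbb R_{\ge0}$. A routing subnetwork is a subset $\mathcal T\subseteq\mathcal S\cup\mathcal E$ with $|\mathcal T\cap\mathcal S|=1$ (the unique source is $\nu(\mathcal T)$) such that $\mathrm{in}(e)\cap\mathcal T\ne\emptyset$ for every $e\in\mathcal T\cap\mathcal E$. A tuple $(\lambda,\omega)$ is $0$-achievable subject to the generalised routing constraint if there is a (finite) collection of routing subnetworks $\mathcal T_i$ with capacities $c_i\ge0$ such that (R1) $\omega(e)\ge\sum_{i:e\in\mathcal T_i}c_i$ for all $e\in\mathcal E$, and (R2$'$) for every $s\in\mathcal S$ and $u\in D(s)$, $\lambda(s)\le\sum_{i:\ \mathrm{in}(u)\cap\mathcal T_i\ne\emptyset,\ \nu(\mathcal T_i)=s}c_i$. $\mathcal H[\mathcal S\cup\mathcal E]$ is the set of real functions on subsets of $\mathcal S\cup\mathcal E$; $g(\alpha\mid\beta)=g(\alpha\cup\beta)-g(\beta)$, $g(\alpha\wedge\beta)=g(\alpha)+g(\beta)-g(\alpha\cup\beta)$. A function $h$ is atomic if there is $\mathcal T\subseteq\mathcal S\cup\mathcal E$ with $h(\beta)=1$ when $\beta\cap\mathcal T\ne\emptyset$ and $0$ otherwise; almost atomic if it is a finite nonnegative combination of atomic functions; $\Gamma_{AA}$ is the set of almost atomic functions. $\mathcal C_I(\mathsf P)=\{h:h(\mathcal S)=\sum_sh(s)\}$, $\mathcal C_T(\mathsf P)=\{h:h(e\mid\mathrm{in}(e))=0\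 \forall e\in\mathcal E\}$. Operators are applied elementwise to sets. For a set $\mathcal R$ of tuples, $\mathsf{CL}(\mathcal R)$ is the set of $(\lambda,\omega)$ such that there exist $(\lambda^n,\omega^n)\in\mathcal R$ and $c_n>0$ with $\lim_nc_n\omega^n(e)\le\omega(e)$ and $\lim_nc_n\lambda^n(s)\ge\lambda(s)$ for all $e,s$. *)

From HB Require Import structures.
From mathcomp Require Import all_boot all_order all_algebra.
From mathcomp Require Import all_classical all_reals all_analysis.
Set Implicit Arguments. Unset Strict Implicit. Unset Printing Implicit Defensive.
Import Order.TTheory GRing.Theory Num.Theory.
Import numFieldNormedType.Exports.

Local Open Scope classical_set_scope.
Local Open Scope ring_scope.

Record problem (V E S : finType) := Problem {
  tail : E -> V;
  head : E -> {set V};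
  O : S -> {set V};      (* where source s is available *)
  D : S -> {set V}       (* sinks of source s *)
}.

Section Defs.
Variables (V E S : finType) (P : problem V E S).

Definition acyclic : Prop :=
  forall (e : E) (s : seq E),
    ~~ cycle [rel e1 e2 | tail P e2 \in head P e1] (e :: s).

(* sources are imaginary edges with head(s) = O(s) *)
Definition headf (f : S + E) : {set V} :=
  match f with inl s => O P s | inr e => head P e end.

Definition in_edge (e : E) : {set S + E} := finset (fun f => tail P e \in headf f).
Definition in_node (u : V) : {set S + E} := finset (fun f => u \in headf f).

Definition all_sources : {set S + E} := finset (fun f : S + E => if f is inl _ then true else false).

Definition nu (T : {set S + E}) : option S := [pick s | inl s \in T].

Definition routing_subnetwork (T : {set S + E}) : Prop :=
  #|finset (fun s => inl s \in T)| = 1%N /\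
  forall e : E, inr e \in T -> in_edge e :&: T != finset.set0.

Definition zero_achievable_routing (R : realType)
    (lam : S -> R) (om : E -> R) : Prop :=
  exists (n : nat) (T : 'I_n -> {set S + E}) (c : 'I_n -> R),
    (forall i, routing_subnetwork (T i)) /\ (forall i, 0 <= c i) /\
    (forall e : E, \sum_(i | inr e \in T i) c i <= om e) /\
    (forall (s : S) (u : V), u \in D P s ->
       lam s <= \sum_(i | (in_node u :&: T i != finset.set0) && (nu (T i) == Some s)) c i).

Definition hfun (R : realType) := {set S + E} -> R.

Definition hcond (R : realType) (g : hfun R) (a b : {set S + E}) : R :=
  g (a :|: b) - g b.
Definition hmeet (R : realType) (g : hfun R) (a b : {set S + E}) : R :=
  g a + g b - g (a :|: b).

Definition atom (R : realType) (T : {set S + E}) : hfun R :=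
  fun b => if b :&: T != finset.set0 then 1 else 0.

Definition atomic (R : realType) (h : hfun R) : Prop :=
  exists T : {set S + E}, forall b, h b = atom R T b.

Definition almost_atomic (R : realType) (h : hfun R) : Prop :=
  exists (n : nat) (c : 'I_n -> R) (g : 'I_n -> hfun R),
    (forall i, 0 <= c i) /\ (forall i, atomic (g i)) /\
    (forall b, h b = \sum_i c i * g i b).

Definition C_I (R : realType) (h : hfun R) : Prop :=
  h all_sources = \sum_(s : S) h (finset.set1 (inl s)).

Definition C_T (R : realType) (h : hfun R) : Prop :=
  forall e : E, hcond h (finset.set1 (inr e)) (in_edge e) = 0.

(* proj*_P[h](s) = min_{u in D(s)} h(s /\ in(u)), with min over the empty
   set taken to be +oo (hence extended-real valued) *)
Definition proj_src (R : realType) (h : hfun R) (s : S) : \bar R :=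
  \big[Order.min/+oo%E]_(u in D P s) (hmeet h (finset.set1 (inl s)) (in_node u))%:E.

Definition proj_edge (R : realType) (h : hfun R) (e : E) : R := h (finset.set1 (inr e)).

Definition CL (R : realType)
    (Rset : (S -> \bar R) -> (E -> R) -> Prop)
    (lam : S -> R) (om : E -> R) : Prop :=
  exists (lamn : nat -> S -> \bar R) (omn : nat -> E -> R) (c : nat -> R),
    (forall n, Rset (lamn n) (omn n)) /\ (forall n, 0 < c n) /\
    (forall e : E, exists l : R,
        (fun n => c n * omn n e) @ \oo --> l /\ l <= om e) /\
    (forall s : S, exists l : \bar R,
        (fun n => ((c n)%:E * lamn n s)%E) @ \oo --> l /\ ((lam s)%:E <= l)%E).

Definition proj_AA_TI (R : realType) (lam : S -> \bar R) (om : E -> R) : Prop :=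
  exists h : hfun R, almost_atomic h /\ C_T h /\ C_I h /\
    lam = proj_src h /\ om = proj_edge h.

End Defs.

(* A routing solution with subnetworks T_i and capacities c_i is encoded by the
   almost atomic function h = sum_i c_i [atom T_i]: the routing axiom of each
   T_i is exactly C_T, having a single source is exactly C_I, h(e) is the load
   of e, and h(s /\ in(u)) is the capacity of the subnetworks of source s
   reaching u.  Conversely, positivity of the weights forces every atom of a
   function in Gamma_AA /\ C_T /\ C_I with positive weight to be a routing
   subnetwork, so each point of the projection is a routing solution up to
   scaling.  The closure CL is then absorbed by compactness: the scaled
   weights, truncated at a bound above every rate, range over a compact box of
   R^{subsets of S u E}, and any cluster point is a routing solution. *)
From HB Require Import structures.
From mathcomp Require Import all_boot all_order all_algebra.
From mathcomp Require Import all_classical all_reals all_analysis.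
Import Order.TTheory GRing.Theory Num.Theory.
Import numFieldNormedType.Exports.
Set Implicit Arguments. Unset Strict Implicit. Unset Printing Implicit Defensive.
Local Open Scope ring_scope.

Lemma ler_sum_support {R : numDomainType} (I : finType) (P1 P2 : pred I)
    (F : I -> R) :
  (forall i, 0 <= F i) -> (forall i, P1 i -> 0 < F i -> P2 i) ->
  \sum_(i | P1 i) F i <= \sum_(i | P2 i) F i.
Proof.
move=> F_ge0 P12; rewrite [leLHS]big_mkcond [leRHS]big_mkcond /=.
apply: ler_sum => i _; case: (boolP (P1 i)) => [P1i|_]; last by case: (P2 i).
have := F_ge0 i; rewrite le_eqVlt => /orP[/eqP <-|Fi_gt0]; first by case: (P2 i).
by rewrite (P12 i P1i Fi_gt0).
Qed.

Lemma min_sum_le_sum_min {R : realDomainType} (I : finType) (Q : pred I)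
    (a : I -> R) (B : R) :
  0 <= B -> (forall i, 0 <= a i) ->
  Num.min (\sum_(i | Q i) a i) B <= \sum_(i | Q i) Num.min (a i) B.
Proof.
move=> B_ge0 a_ge0.
case: (boolP [exists i, Q i && (B <= a i)]) => [/existsP[i /andP[Qi Bai]]|].
  apply: le_trans (_ : B <= _); first by rewrite ge_min lexx orbT.
  rewrite (bigD1 i) //= (min_r Bai) lerDl sumr_ge0 // => j _.
  by rewrite le_min a_ge0.
move=> /existsPn small; rewrite [leRHS](eq_bigr a) ?ge_min ?lexx // => i Qi.
by apply: min_l; move: (small i); rewrite Qi /= -ltNge => /ltW.
Qed.

Section Limits.
Local Open Scope classical_set_scope.

Lemma cvge_gt {R : realType} {T : Type} {F : set_system T} {FF : Filter F}
    (f : T -> \bar R) (l : \bar R) (a : R) :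
  f @ F --> l -> (a%:E < l)%E -> \forall t \near F, (a%:E < f t)%E.
Proof.
move=> fl al; apply: (fl [set y | (a%:E < y)%E]); apply: open_nbhs_nbhs.
by split=> //; exact: open_ereal_gt_ereal.
Qed.

(* [p] is a cluster point of [y] in the compact box [0, B]^I; partial sums
   are continuous, so eventual bounds on them pass to [p]. *)
Lemma bounded_seq_cluster_sums {R : realType} (I : finType) (B : R)
    (y : nat -> I -> R) :
  (forall n i, 0 <= y n i <= B) ->
  exists p : I -> R, (forall i, 0 <= p i) /\
   forall (Q : pred I) (a : R),
     ((forall eps, 0 < eps ->
         \forall n \near \oo, \sum_(i | Q i) y n i <= a + eps) ->
       \sum_(i | Q i) p i <= a) /\
     ((forall eps, 0 < eps ->
         \forall n \near \oo, a - eps <= \sum_(i | Q i) y n i) ->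
       a <= \sum_(i | Q i) p i).
Proof.
move=> y_bnd; pose k := #|I|.
pose v n : 'rV[R]_k := \row_(j < k) y n (enum_val j).
have box_compact := @rV_compact R k (fun _ => `[0, B]%classic)
  (fun _ => @segment_compact R 0 B).
set box := [set v | _] in box_compact.
have v_box : (v @ \oo) box.
  by exists 0%N => // n _ j /=; rewrite mxE in_itv /=; exact: y_bnd.
have [p [p_box p_cluster]] := box_compact _ _ v_box.
move: p_cluster; rewrite cluster_cvgE /= => -[G G_proper [Gp vG]].
exists (fun i => p ord0 (enum_rank i)); split.
  by move=> i; have := p_box (enum_rank i); rewrite /= in_itv /= => /andP[].
move=> Q a; pose L (M : 'rV[R]_k) := \sum_(i | Q i) M ord0 (enum_rank i).
have L_cont : continuous L.
  apply: (@continuous_big R I +%R 0 Q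
    (@pseudometric_normed_Zmodule.add_continuous R R)) => i _.
  exact: coord_continuous.
have LG : L @ G --> L p by apply: cvg_trans (cvg_app L Gp) (L_cont p).
have Lv n : L (v n) = \sum_(i | Q i) y n i.
  by apply: eq_bigr => i _; rewrite mxE enum_rankK.
split=> [ev_le|ev_ge]; apply/ler_addgt0Pr => e e_gt0.
- apply: (@closed_cvg _ _ G _ L [set x | x <= a + e] (@closed_le _ _) _ _ LG).
  by apply: vG; apply: filterS (ev_le e e_gt0) => n /=; rewrite Lv.
- rewrite -lerBlDr.
  apply: (@closed_cvg _ _ G _ L [set x | a - e <= x] (@closed_ge _ _) _ _ LG).
  by apply: vG; apply: filterS (ev_ge e e_gt0) => n /=; rewrite Lv.
Qed.

End Limits.

Section NetworkCoding.
Variables (V E S : finType) (P : problem V E S) (R : realType).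
Notation K := {set S + E}.

Definition sources_of (T : K) : {set S} := [set s | inl s \in T].

Definition routing_subnetworkb (T : K) : bool :=
  (#|sources_of T| == 1%N) &&
  [forall e, (inr e \in T) ==> (in_edge P e :&: T != finset.set0)].

Lemma routing_subnetworkP (T : K) :
  reflect (routing_subnetwork P T) (routing_subnetworkb T).
Proof.
apply: (iffP andP) => [[/eqP T1 /forallP Tin]|[T1 Tin]]; split => //.
- by move=> e eT; have := Tin e; rewrite eT.
- by apply/eqP.
- by apply/forallP => e; apply/implyP; exact: Tin.
Qed.

Lemma nu_single_source (T : K) s :
  #|sources_of T| = 1%N -> inl s \in T -> nu T = Some s.
Proof.
move=> /eqP/cards1P[s1 T_s1] sT; rewrite /nu.
case: pickP => [s0 s0T|T0]; last by rewrite T0 in sT.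
have : s0 \in sources_of T by rewrite inE.
have : s \in sources_of T by rewrite inE.
by rewrite T_s1 !inE => /eqP -> /eqP ->.
Qed.

Lemma nu_Some_in (T : K) s : nu T = Some s -> inl s \in T.
Proof. by rewrite /nu; case: pickP => // s0 s0T [<-]. Qed.

Lemma set1I_neq0 (x : S + E) (T : K) :
  ([set x] :&: T != finset.set0) = (x \in T).
Proof.
apply/finset.set0Pn/idP => [[y]|xT]; first by rewrite inE => /andP[/set1P ->].
by exists x; rewrite inE set11.
Qed.

Lemma setUI_neq0 (a b T : K) :
  ((a :|: b) :&: T != finset.set0) =
  (a :&: T != finset.set0) || (b :&: T != finset.set0).
Proof. by rewrite finset.setIUl finset.setU_eq0 negb_and. Qed.

Lemma atom_set1 (x : S + E) (T : K) :
  atom R T [set x] = if x \in T then 1 else 0.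
Proof. by rewrite /atom set1I_neq0. Qed.

Lemma hmeet_atom_source (T b : K) s :
  hmeet (atom R T) [set inl s] b =
  if (inl s \in T) && (b :&: T != finset.set0) then 1 else 0.
Proof.
rewrite /hmeet /atom setUI_neq0 set1I_neq0.
by case: (inl s \in T); case: (b :&: T != finset.set0) => /=;
  rewrite ?addrK ?addr0 ?add0r ?subrr.
Qed.

Lemma hcond_atom_ge0 (T a b : K) : 0 <= hcond (atom R T) a b.
Proof.
rewrite /hcond /atom setUI_neq0.
by case: (a :&: T != finset.set0); case: (b :&: T != finset.set0) => /=;
  rewrite ?subrr ?subr0 ?ler01 ?lexx.
Qed.

Lemma hcond_atom_edge (T : K) e :
  hcond (atom R T) [set inr e] (in_edge P e) =
  if (inr e \in T) && (in_edge P e :&: T == finset.set0) then 1 else 0.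
Proof.
rewrite /hcond /atom setUI_neq0 set1I_neq0.
by case: (inr e \in T); case: (in_edge P e :&: T == finset.set0) => /=;
  rewrite ?subrr ?subr0.
Qed.

Lemma sum_atom_sources (T : K) :
  \sum_s atom R T [set inl s] = #|sources_of T|%:R.
Proof.
rewrite (eq_bigr (fun s => if s \in sources_of T then 1 else 0)).
  by rewrite -big_mkcond /= sumr_const.
by move=> s _; rewrite atom_set1 inE.
Qed.

Lemma atom_all_sources_le (T : K) :
  atom R T (all_sources E S) <= #|sources_of T|%:R.
Proof.
rewrite /atom; case: finset.set0Pn => [[x]|_]; last by rewrite ler0n.
rewrite inE => /andP[]; case: x => [s|e]; rewrite /all_sources inE // => _ sT.
by rewrite ler1n card_gt0; apply/finset.set0Pn; exists s; rewrite inE.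
Qed.

Lemma atom_all_sources (T : K) s :
  inl s \in T -> atom R T (all_sources E S) = 1.
Proof.
move=> sT; rewrite /atom; case: finset.set0Pn => // -[]; exists (inl s).
by rewrite inE sT andbT /all_sources inE.
Qed.

Section AtomComb.
Variables (n : nat) (T : 'I_n -> K) (c : 'I_n -> R).

Definition atom_comb : hfun E S R := fun b => \sum_i c i * atom R (T i) b.

Lemma atom_comb_almost_atomic : (forall i, 0 <= c i) -> almost_atomic atom_comb.
Proof.
move=> c_ge0; exists n, c, (fun i => atom R (T i)); split=> //; split=> // i.
by exists (T i).
Qed.

Lemma hmeet_atom_comb a b :
  hmeet atom_comb a b = \sum_i c i * hmeet (atom R (T i)) a b.
Proof.
rewrite /hmeet /atom_comb -big_split /= -sumrB; apply: eq_bigr => i _.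
by rewrite mulrBr mulrDr.
Qed.

Lemma hcond_atom_comb a b :
  hcond atom_comb a b = \sum_i c i * hcond (atom R (T i)) a b.
Proof.
by rewrite /hcond /atom_comb -sumrB; apply: eq_bigr => i _; rewrite mulrBr.
Qed.

Lemma proj_edge_atom_comb e :
  proj_edge atom_comb e = \sum_(i | inr e \in T i) c i.
Proof.
rewrite /proj_edge /atom_comb [RHS]big_mkcond /=; apply: eq_bigr => i _.
by rewrite atom_set1; case: ifP; rewrite ?mulr1 ?mulr0.
Qed.

Lemma hmeet_atom_comb_source s b :
  hmeet atom_comb [set inl s] b =
  \sum_(i | (inl s \in T i) && (b :&: T i != finset.set0)) c i.
Proof.
rewrite hmeet_atom_comb [RHS]big_mkcond /=; apply: eq_bigr => i _.
by rewrite hmeet_atom_source; case: ifP; rewrite ?mulr1 ?mulr0.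
Qed.

Lemma C_I_atom_comb_iff :
  C_I atom_comb <->
  \sum_i c i * (#|sources_of (T i)|%:R - atom R (T i) (all_sources E S)) = 0.
Proof.
under eq_bigr do rewrite mulrBr -sum_atom_sources mulr_sumr.
rewrite sumrB exchange_big /= /C_I /atom_comb.
by split=> [->|/eqP]; rewrite ?subrr // subr_eq0 => /eqP ->.
Qed.

Lemma atom_comb_C_T :
  (forall i e, inr e \in T i -> in_edge P e :&: T i != finset.set0) ->
  C_T P atom_comb.
Proof.
move=> T_routing e; rewrite hcond_atom_comb; apply: big1 => i _.
rewrite hcond_atom_edge; case: (boolP (inr e \in T i)) => [eT|_].
  by rewrite (negbTE (T_routing i e eT)) mulr0.
by rewrite mulr0.
Qed.

Lemma atom_comb_C_I : (forall i, #|sources_of (T i)| = 1%N) -> C_I atom_comb.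
Proof.
move=> T_single; apply/C_I_atom_comb_iff; apply: big1 => i _.
have /eqP/cards1P[s Ts] := T_single i.
have : s \in sources_of (T i) by rewrite Ts set11.
by rewrite inE => /atom_all_sources ->; rewrite T_single subrr mulr0.
Qed.

Hypothesis c_ge0 : forall i, 0 <= c i.

(* In both converses a sum of nonnegative terms vanishes, so every term with
   a positive weight vanishes. *)
Lemma C_T_atom_comb_routing i e :
  C_T P atom_comb -> 0 < c i -> inr e \in T i ->
  in_edge P e :&: T i != finset.set0.
Proof.
move=> /(_ e); rewrite hcond_atom_comb => /psumr_eq0P CT ci_gt0 eT.
have /(_ i isT)/eqP := CT (fun j _ => mulr_ge0 (c_ge0 j) (hcond_atom_ge0 _ _ _)).
rewrite mulf_eq0 (gt_eqF ci_gt0) hcond_atom_edge eT /=.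
by case: ifP => [_|/negbT]; rewrite ?oner_eq0.
Qed.

Lemma C_I_atom_comb_single_source i s :
  C_I atom_comb -> 0 < c i -> inl s \in T i -> #|sources_of (T i)| = 1%N.
Proof.
move=> /C_I_atom_comb_iff /psumr_eq0P CI ci_gt0 sT.
have terms_ge0 j : true ->
    0 <= c j * (#|sources_of (T j)|%:R - atom R (T j) (all_sources E S)).
  by move=> _; rewrite mulr_ge0 // subr_ge0 atom_all_sources_le.
have /(_ i isT)/eqP := CI terms_ge0.
rewrite mulf_eq0 (gt_eqF ci_gt0) (atom_all_sources sT) subr_eq0 /=.
by rewrite -[1]/(1%:R) eqr_nat => /eqP.
Qed.

End AtomComb.

Lemma routing_achievable_CL (lam : S -> R) (om : E -> R) :
  zero_achievable_routing P lam om -> CL (proj_AA_TI P (R:=R)) lam om.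
Proof.
move=> [n [T [c [T_routing [c_ge0 [load rate]]]]]].
pose h := atom_comb T c.
have proj_h : proj_AA_TI P (proj_src P h) (proj_edge h).
  exists h; split; first exact: atom_comb_almost_atomic.
  split; first by apply: atom_comb_C_T => i; exact: (T_routing i).2.
  by split=> //; apply: atom_comb_C_I => i; exact: (T_routing i).1.
exists (fun _ => proj_src P h), (fun _ => proj_edge h), (fun _ => 1).
split=> //; split=> [_|]; first exact: ltr01.
split=> [e|s].
  exists (proj_edge h e); rewrite proj_edge_atom_comb load; split => //.
  by under eq_fun do rewrite mul1r; exact: cvg_cst.
exists (proj_src P h s); split.
  by under eq_fun do rewrite mul1e; exact: cvg_cst.
apply: le_bigmin => [|u uD]; first exact: leey.
rewrite lee_fin hmeet_atom_comb_source; apply: le_trans (rate s u uD) _.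
apply: ler_sum_support => // i /andP[uT /eqP/nu_Some_in sT] _.
by rewrite sT uT.
Qed.

Definition carries (e : E) (T : K) := routing_subnetworkb T && (inr e \in T).

Definition delivers (s : S) (u : V) (T : K) :=
  [&& routing_subnetworkb T, in_node P u :&: T != finset.set0 & nu T == Some s].

Lemma proj_AA_TI_routing_weights (lam : S -> \bar R) (om : E -> R) :
  proj_AA_TI P lam om ->
  exists x : K -> R, (forall T, 0 <= x T) /\
    (forall e, \sum_(T | carries e T) x T <= om e) /\
    (forall s u, u \in D P s -> (lam s <= (\sum_(T | delivers s u T) x T)%:E)%E).
Proof.
move=> [h [[n [c [g [c_ge0 [g_atomic hg]]]]] [CT [CI [-> ->]]]]].
have [T gT] := boolp.choice g_atomic.
have h_comb : h = atom_comb T c.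
  by apply: boolp.funext => b; rewrite hg; apply: eq_bigr => i _; rewrite gT.
rewrite {}h_comb in CT CI *.
pose x S0 := \sum_(i | T i == S0) c i.
have regroup (Q : pred K) : \sum_(S0 | Q S0) x S0 = \sum_(i | Q (T i)) c i.
  rewrite (partition_big T Q) //=; apply: eq_bigr => S0 QS0; apply: eq_bigl => i.
  by case: (eqVneq (T i) S0) => [->|]; rewrite ?QS0 ?andbF ?andbT.
exists x; split; first by move=> S0; apply: sumr_ge0.
split=> [e|s u uD]; rewrite regroup.
  rewrite proj_edge_atom_comb; apply: ler_sum_support => // i.
  by case/andP.
apply: le_trans (bigmin_le_cond _ _ uD) _.
rewrite lee_fin hmeet_atom_comb_source; apply: ler_sum_support => // i.
move=> /andP[sT uT] ci_gt0.
have T1 := C_I_atom_comb_single_source c_ge0 CI ci_gt0 sT.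
rewrite /delivers uT (nu_single_source T1 sT) eqxx /= andbT.
rewrite /routing_subnetworkb T1 eqxx /=.
by apply/forallP => e; apply/implyP; exact: C_T_atom_comb_routing.
Qed.

Section ClusterPoint.
Local Open Scope classical_set_scope.
Variables (lam : S -> R) (om : E -> R).
Variables (lamn : nat -> S -> \bar R) (omn : nat -> E -> R) (c : nat -> R).
Variable x : nat -> K -> R.
Hypotheses (lam_ge0 : forall s, 0 <= lam s) (c_gt0 : forall n, 0 < c n).
Hypotheses (x_ge0 : forall n T, 0 <= x n T)
  (x_load : forall n e, \sum_(T | carries e T) x n T <= omn n e)
  (x_rate : forall n s u, u \in D P s ->
     (lamn n s <= (\sum_(T | delivers s u T) x n T)%:E)%E).
Hypotheses
  (omn_lim : forall e, exists l,
     (fun n => c n * omn n e) @ \oo --> l /\ l <= om e)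
  (lamn_lim : forall s, exists l : \bar R,
     (fun n => ((c n)%:E * lamn n s)%E) @ \oo --> l /\ ((lam s)%:E <= l)%E).

(* The scaled weights may diverge; truncating them at [B], which exceeds
   every demanded rate, makes them bounded without losing any rate. *)
Let B := 1 + \sum_s lam s.
Let y n T := Num.min (c n * x n T) B.

Let lam_le_B s : lam s <= B.
Proof.
apply: le_trans (_ : \sum_s lam s <= B); last by rewrite lerDr ler01.
by rewrite (bigD1 s) //= lerDl sumr_ge0.
Qed.

Let B_ge0 : 0 <= B.
Proof. by rewrite addr_ge0 ?ler01 ?sumr_ge0. Qed.

Lemma truncated_load_eventually e eps : 0 < eps ->
  \forall n \near \oo, \sum_(T | carries e T) y n T <= om e + eps.
Proof.
move=> eps_gt0; have [l [cvg_l l_le]] := omn_lim e.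
have : l < l + eps by rewrite ltrDl.
move=> /(cvgr_lt _ cvg_l); apply: filterS => n load_lt.
apply: le_trans (_ : c n * \sum_(T | carries e T) x n T <= _).
  by rewrite mulr_sumr; apply: ler_sum => T _; rewrite ge_min lexx.
apply: le_trans (_ : c n * omn n e <= _); first by rewrite ler_pM2l ?x_load.
by apply: le_trans (ltW load_lt) _; rewrite lerD2r.
Qed.

Lemma truncated_rate_eventually s u eps : u \in D P s -> 0 < eps ->
  \forall n \near \oo, lam s - eps <= \sum_(T | delivers s u T) y n T.
Proof.
move=> uD eps_gt0; have [l [cvg_l lam_le]] := lamn_lim s.
have : ((lam s - eps)%:E < l)%E.
  by apply: lt_le_trans lam_le; rewrite lte_fin gtrBl.
move=> /(cvge_gt cvg_l); apply: filterS => n rate_gt.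
have rate_lt : lam s - eps < c n * \sum_(T | delivers s u T) x n T.
  rewrite -lte_fin; apply: lt_le_trans rate_gt _; rewrite EFinM.
  by apply: lee_wpmul2l; [rewrite lee_fin ltW | exact: x_rate].
have x_scaled_ge0 T : 0 <= c n * x n T by rewrite mulr_ge0 // ltW.
apply: le_trans (min_sum_le_sum_min (delivers s u) B_ge0 x_scaled_ge0).
rewrite le_min -mulr_sumr (ltW rate_lt) /=.
by apply: le_trans (lam_le_B s); rewrite gerBl ltW.
Qed.

Lemma cluster_routing_achievable : zero_achievable_routing P lam om.
Proof.
have y_bnd n T : 0 <= y n T <= B.
  by rewrite le_min ge_min lexx orbT B_ge0 !andbT mulr_ge0 // ltW.
have [p [p_ge0 p_sums]] := bounded_seq_cluster_sums y_bnd.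
exists #|routing_subnetworkb|, (fun i => enum_val i), (fun i => p (enum_val i)).
split; first by move=> i; apply/routing_subnetworkP; exact: (enum_valP i).
split=> //; split=> [e|s u uD].
  rewrite -(big_enum_val_cond (fun T : K => inr e \in T) p).
  rewrite (eq_bigl (carries e)) //.
  by apply: (p_sums _ _).1 => eps; exact: truncated_load_eventually.
rewrite -(big_enum_val_cond
  (fun T : K => (in_node P u :&: T != finset.set0) && (nu T == Some s)) p).
rewrite (eq_bigl (delivers s u)) //.
by apply: (p_sums _ _).2 => eps; exact: truncated_rate_eventually.
Qed.

End ClusterPoint.

Lemma CL_routing_achievable (lam : S -> R) (om : E -> R) :
  (forall s, 0 <= lam s) ->
  CL (proj_AA_TI P (R:=R)) lam om -> zero_achievable_routing P lam om.
Proof.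
move=> lam_ge0 [lamn [omn [c [proj_n [c_gt0 [omn_lim lamn_lim]]]]]].
have [x x_weights] :=
  boolp.choice (fun n => proj_AA_TI_routing_weights (proj_n n)).
apply: (cluster_routing_achievable (x := x)) lamn_lim => //.
- by move=> n; exact: (x_weights n).1.
- by move=> n; exact: (x_weights n).2.1.
- by move=> n; exact: (x_weights n).2.2.
Qed.

End NetworkCoding.

Theorem theorem6 (R : realType) (V E S : finType) (P : problem V E S)
    (hacyc : acyclic P) (lam : S -> R) (om : E -> R)
    (hlam : forall s, 0 <= lam s) (hom : forall e, 0 <= om e) :
  zero_achievable_routing P lam om <-> CL (proj_AA_TI P (R:=R)) lam om.
Proof.
split; [exact: routing_achievable_CL | exact: CL_routing_achievable].
Qed.
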